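(* Let $y:\Lambda\to\mathbb R$ and $\alpha\in[Dy]$ be such that $\alpha_b\to0$ as $|b|\to\infty$. Then for any $\alpha'\in[Dy]$, the set $\mathcal C^\pm[\alpha']$ is finite and $$\sum_{C\in\mathcal C^\pm[\alpha']}\int_{\partial C}\alpha'=\sum_{C\in\mathcal C^\pm[\alpha]}\int_{\partial C}\alpha=\int_\Gamma\alpha,$$ where $\Gamma$ is any loop that encloses all cores of $\alpha$, i.e. $\Gamma=\partial A$ for a finite sum $A$ of positively oriented cells containing every element of $\mathcal C^\pm[\alpha]$.
   Context: $\mathsf R_6$ rotation by $\pi/3$, $a_1=(1,0)^T$, $a_i=\mathsf R_6^{i-1}a_1$, $\Lambda:=(\tfrac12,\tfrac{\sqrt3}{6})^T+\{ma_1+na_2:m,n\in\mathbb Z\}$. Bonds $\mathcal B=\{(\xi,\eta)\in\Lambda^2:|\xi-\eta|=1\}$ (ordered pairs), $-b=(\eta,\xi)$, $Dy_b=y(\eta)-y(\xi)$; $|b|$ is the distance from the origin to the closed segment $b$. A cell is a triple $C=(\xi,\zeta,\eta)$ of lattice points pairwise joined by bonds; positively oriented if counterclockwise; $\partial C=(\xi,\zeta)+(\zeta,\eta)+(\eta,\xi)$; for a finite sum $A$ of cells, $\partial A$ is the sum of their boundaries (as formal sums of bonds, where $b+(-b)=0$). For $\alpha:\mathcal B\to\mathbb R$ and a formal sum $\Gamma=\sum_k b_k$, $\int_\Gamma\alpha=\sum_k\alpha_{b_k}$. $[Dy]$ is the set of $\alpha:\mathcal B\to[-\tfrac12,\tfrac12]$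 with $\alpha_{-b}=-\alpha_b$ and $Dy_b-\alpha_b\in\mathbb Z$ for all $b$. A dislocation core of $\alpha$ is a positively oriented cell $C$ with $\int_{\partial C}\alpha\ne0$; $\mathcal C^\pm[\alpha]$ is the set of dislocation cores of $\alpha$. *)

From HB Require Import structures.
From mathcomp Require Import all_boot all_order all_algebra.
From mathcomp Require Import all_classical all_reals.
Set Implicit Arguments. Unset Strict Implicit. Unset Printing Implicit Defensive.
Import Order.TTheory GRing.Theory Num.Theory.
Local Open Scope ring_scope.
Local Open Scope classical_set_scope.

(* A lattice point of Lambda is encoded by its integer coordinates (m,n):
   it stands for  pos (m,n) = (1/2, sqrt3/6) + m a1 + n a2  in R^2. *)
Definition pt := (int * int)%type.

Section Lattice.
Variable R : realType.

Definition s3 : R := Num.sqrt 3.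

(* a1 = (1,0), a2 = R6 a1 = (1/2, sqrt3/2) *)
Definition pos (p : pt) : R * R :=
  (2^-1 + p.1%:~R + p.2%:~R / 2, s3 / 6 + p.2%:~R * s3 / 2).

Definition vnorm (v : R * R) : R := Num.sqrt (v.1 ^+ 2 + v.2 ^+ 2).
Definition vsub (u v : R * R) : R * R := (u.1 - v.1, u.2 - v.2).

Definition bond (xi eta : pt) : Prop := vnorm (vsub (pos xi) (pos eta)) = 1.

Definition bnorm (xi eta : pt) : R :=
  inf [set vnorm ((1 - t) * (pos xi).1 + t * (pos eta).1,
                  (1 - t) * (pos xi).2 + t * (pos eta).2) | t in `[0, 1]].

(* A bond function alpha : B -> R is modelled as a function on all ordered
   pairs; only its values on bonds are ever used. *)

Definition in_Dy (y : pt -> R) (alpha : pt -> pt -> R) : Prop :=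
  forall xi eta, bond xi eta ->
    [/\ - 2^-1 <= alpha xi eta <= 2^-1,
        alpha eta xi = - alpha xi eta &
        (y eta - y xi) - alpha xi eta \is a Num.int].

Definition vanishes_at_infinity (alpha : pt -> pt -> R) : Prop :=
  forall eps : R, 0 < eps -> exists r : R, forall xi eta,
    bond xi eta -> r < bnorm xi eta -> `|alpha xi eta| < eps.

(* formal sums of bonds: lists of bonds; integral of alpha over them *)
Definition lint (alpha : pt -> pt -> R) (G : seq (pt * pt)) : R :=
  \sum_(b <- G) alpha b.1 b.2.

Definition cell := (pt * pt * pt)%type.

Definition is_cell (C : cell) : Prop :=
  let: (xi, zeta, eta) := C in bond xi zeta /\ bond zeta eta /\ bond eta xi.

Definition pos_oriented (C : cell) : Prop :=
  let: (xi, zeta, eta) := C in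
  is_cell C /\
  let u := vsub (pos zeta) (pos xi) in
  let v := vsub (pos eta) (pos xi) in
  0 < u.1 * v.2 - u.2 * v.1.

Definition bdry (C : cell) : seq (pt * pt) :=
  let: (xi, zeta, eta) := C in [:: (xi, zeta); (zeta, eta); (eta, xi)].

Definition bdryA (A : seq cell) : seq (pt * pt) := flatten (map bdry A).

Definition cores (alpha : pt -> pt -> R) : set cell :=
  [set C | pos_oriented C /\ lint alpha (bdry C) != 0].

End Lattice.

From HB Require Import structures.
From mathcomp Require Import all_boot all_order all_algebra.
From mathcomp Require Import all_classical all_reals.
From mathcomp Require Import ring lra zify.
Set Implicit Arguments. Unset Strict Implicit. Unset Printing Implicit Defensive.
Import Order.TTheory GRing.Theory Num.Theory.
Local Open Scope ring_scope.
Local Open Scope classical_set_scope.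

(* Since [alpha] and [alpha'] both lie in [Dy], they differ on a bond by an
   integer, so they agree wherever [|alpha| < 1/2]; and the circulation of an
   element of [Dy] around a cell is an integer, hence vanishes when all three
   bonds carry values below [1/3].  As [alpha] decays at infinity, the cores of
   every [alpha'] lie in a fixed finite box [D] of cells.  On [D] the
   circulation of [beta = alpha' - alpha] splits into the contributions of the
   three bonds of each cell, and each of the three resulting sums is a sum of
   [beta] over the first bonds of all positively oriented cells.  That sum
   vanishes: reflecting a positive cell across its first bond gives a positive
   cell whose first bond is the reversed one, and [beta] is antisymmetric. *)

Lemma fsbigN (T : choiceType) (R : zmodType) (A : set T) (f : T -> R) :
  \sum_(i \in A) - f i = - \sum_(i \in A) f i.
Proof.
have supp : (fun i => - f i) @^-1` [set~ 0] = f @^-1` [set~ 0].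
  by apply/seteqP; split => x /= /eqP h; apply/eqP; rewrite ?oppr_eq0 in h *.
by rewrite /finite_support supp sumrN.
Qed.

Lemma int_interval_finite (N : nat) :
  finite_set [set z : int | - (N%:Z) < z < N%:Z].
Proof.
apply: (sub_finite_set (B := (fun i : 'I_(N + N) => (i : nat)%:Z - N%:Z) @` setT)).
  move=> z /andP[h1 h2]; have hi : (absz (z + N%:Z)%R < N + N)%N by lia.
  by exists (Ordinal hi) => //=; lia.
exact: finite_image finite_finset.
Qed.

Section Lattice.
Variable R : realType.

Lemma abs_fst_le_vnorm (v : R * R) : `|v.1| <= vnorm v.
Proof.
by rewrite /vnorm -sqrtr_sqr; apply: ler_wsqrtr; rewrite lerDl sqr_ge0.
Qed.

Lemma abs_snd_le_vnorm (v : R * R) : `|v.2| <= vnorm v.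
Proof.
by rewrite /vnorm -sqrtr_sqr; apply: ler_wsqrtr; rewrite lerDr sqr_ge0.
Qed.

Lemma bond_sym a b : bond R a b -> bond R b a.
Proof.
by rewrite /bond => <-; rewrite /vnorm /vsub /=; congr Num.sqrt; ring.
Qed.

Lemma bond_coord a b : bond R a b ->
  `|(pos R a).1 - (pos R b).1| <= 1 /\ `|(pos R a).2 - (pos R b).2| <= 1.
Proof.
move=> hab; have := abs_fst_le_vnorm (vsub (pos R a) (pos R b)).
by have := abs_snd_le_vnorm (vsub (pos R a) (pos R b)); rewrite hab.
Qed.

Definition inbox (M : R) : set pt :=
  [set p | `|(pos R p).1| <= M /\ `|(pos R p).2| <= M].

Lemma inbox_le (M M' : R) p : M <= M' -> inbox M p -> inbox M' p.
Proof. by move=> hM [h1 h2]; split; apply: le_trans hM. Qed.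

Lemma inbox_bond (M : R) a b : bond R a b -> inbox M a -> inbox (M + 1) b.
Proof.
have near (u w : R) : `|u| <= M -> `|u - w| <= 1 -> `|w| <= M + 1.
  move=> hu huw; have -> : w = u - (u - w) by ring.
  exact: le_trans (ler_normB _ _) (lerD hu huw).
by move=> /bond_coord[c1 c2] [h1 h2]; split; [apply: near c1 | apply: near c2].
Qed.

Lemma inbox_bnorm a b : bond R a b -> inbox (bnorm R a b + 1) a.
Proof.
move=> /bond_coord[c1 c2].
have segment (u v t : R) : 0 <= t <= 1 -> `|u - v| <= 1 ->
    `|u| - 1 <= `|(1 - t) * u + t * v|.
  move=> /andP[t0 t1] huv; set w := (1 - t) * u + t * v.
  have := ler_normD w (t * (u - v)).
  rewrite (_ : w + _ = u); last by rewrite /w; ring.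
  rewrite normrM (ger0_norm t0).
  have : t * `|u - v| <= 1 by rewrite -(mulr1 1); apply: ler_pM.
  lra.
have ne : [set vnorm ((1 - t) * (pos R a).1 + t * (pos R b).1,
                      (1 - t) * (pos R a).2 + t * (pos R b).2) | t in `[0, 1]]
          !=set0.
  by eexists; exists 0 => //=; rewrite in_itv /= lexx ler01.
suff [g1 g2] : `|(pos R a).1| - 1 <= bnorm R a b /\
               `|(pos R a).2| - 1 <= bnorm R a b by split; lra.
split; apply: lb_le_inf => // _ [t t01 <-]; rewrite /= in_itv /= in t01.
- by apply: le_trans (abs_fst_le_vnorm _); apply: segment.
- by apply: le_trans (abs_snd_le_vnorm _); apply: segment.
Qed.

Lemma inbox_finite (M : R) : finite_set (inbox M).
Proof.
have h3 : 1 <= s3 R by rewrite /s3 -{1}sqrtr1 ler_wsqrtr // ler1n.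
set N := Num.Def.archi_bound `|2 * M + 2|.
have hN : 2 * M + 2 < N%:R by apply: le_lt_trans (ler_norm _) (archi_boundP _).
apply: (sub_finite_set (B := [set z : int | - (N%:Z) < z < N%:Z] `*`
                             [set z : int | - (N%:Z) < z < N%:Z])); last first.
  by apply: finite_setX; exact: int_interval_finite.
move=> [m n] [] /=; rewrite !ler_norml => /andP[a1 a2] /andP[b1 b2].
have [hn1 hn2] : - N%:R < n%:~R :> R /\ n%:~R < N%:R :> R by split; nra.
have [hm1 hm2] : - N%:R < m%:~R :> R /\ m%:~R < N%:R :> R by split; nra.
by split; rewrite -!(ltr_int R) rmorphN; apply/andP.
Qed.

Definition rot (C : cell) : cell := let: ((x, z), e) := C in ((z, e), x).

Lemma iter_rot_mul3 k C : iter (3 * k) rot C = C.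
Proof. by elim: k => // k IH; rewrite mulnS iterD IH; case: C {IH} => [[x z] e]. Qed.

Lemma iter_rot_bij k : bijective (iter k rot).
Proof.
by exists (iter (2 * k)%N rot) => C;
  rewrite -iterD ?(addnC k) -mulSnr iter_rot_mul3.
Qed.

Lemma rot_closed_iter (P : set cell) : (forall C, P C -> P (rot C)) ->
  forall k C, P (iter k rot C) <-> P C.
Proof.
move=> hP; have fwd k C : P C -> P (iter k rot C).
  by elim: k => //= k IH /IH /hP.
move=> k C; split=> [/(fwd (2 * k)%N) | /fwd //].
by rewrite -iterD -mulSnr iter_rot_mul3.
Qed.

Definition cell_in_box (M : R) : set cell :=
  [set C | inbox M C.1.1 /\ inbox M C.1.2 /\ inbox M C.2].

Lemma cell_in_box_rot M C : cell_in_box M C -> cell_in_box M (rot C).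
Proof. by case: C => [[x z] e] [hx [hz he]]. Qed.

Lemma cell_in_box_finite M : finite_set (cell_in_box M).
Proof.
apply: (sub_finite_set (B := (inbox M `*` inbox M) `*` inbox M)).
  by move=> [[x z] e] [hx [hz he]].
by apply: finite_setX; [apply: finite_setX|]; exact: inbox_finite.
Qed.

Lemma is_cell_rot C : is_cell R C -> is_cell R (rot C).
Proof. by case: C => [[x z] e] [b1 [b2 b3]]. Qed.

Lemma pos_oriented_rot C : pos_oriented R C -> pos_oriented R (rot C).
Proof.
case: C => [[x z] e] [/is_cell_rot hc] /= horient; split => //=; nra.
Qed.

Definition reflect_pt (x z e : pt) : pt := (x.1 + z.1 - e.1, x.2 + z.2 - e.2).

(* The other cell containing the first bond of [C], traversed backwards. *)
Definition opposite_cell (C : cell) : cell :=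
  let: ((x, z), e) := C in ((z, x), reflect_pt x z e).

Lemma opposite_cellK : involutive opposite_cell.
Proof.
by move=> [[x z] [e1 e2]]; rewrite /= /reflect_pt /=; congr (_, (_, _)); ring.
Qed.

Lemma pos_reflect_pt x z e :
  pos R (reflect_pt x z e) = ((pos R x).1 + (pos R z).1 - (pos R e).1,
                              (pos R x).2 + (pos R z).2 - (pos R e).2).
Proof. by rewrite /pos /=; congr (_, _); rewrite !(intrD, intrB); ring. Qed.

Lemma bond_translate a b c d :
  vsub (pos R a) (pos R b) = vsub (pos R c) (pos R d) -> bond R c d -> bond R a b.
Proof. by rewrite /bond => ->. Qed.

Lemma pos_oriented_opposite C :
  pos_oriented R C -> pos_oriented R (opposite_cell C).
Proof.
case: C => [[x z] e] [[b1 [b2 b3]] horient]; split; [split; [|split]|].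
- exact: bond_sym.
- apply: (bond_translate (c := e) (d := z)); last exact: bond_sym.
  by rewrite pos_reflect_pt /vsub /=; congr (_, _); ring.
- apply: (bond_translate (c := x) (d := e)); last exact: bond_sym.
  by rewrite pos_reflect_pt /vsub /=; congr (_, _); ring.
- by move: horient; rewrite /= !(intrD, intrB); nra.
Qed.

Lemma lint_bdry_cell (al : pt -> pt -> R) x z e :
  lint al (bdry ((x, z), e)) = al x z + al z e + al e x.
Proof. by rewrite /lint /= !big_cons big_nil addr0 addrA. Qed.

Lemma int_norm_lt1 (x : R) : x \is a Num.int -> `|x| < 1 -> x = 0.
Proof.
move=> hx hlt; apply/eqP; apply: contraTT hlt => /(norm_intr_ge1 hx).
by rewrite -leNgt.
Qed.

Definition pcirc (al : pt -> pt -> R) (C : cell) : R :=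
  if `[< pos_oriented R C >] then lint al (bdry C) else 0.

Definition pedge (al : pt -> pt -> R) (C : cell) : R :=
  if `[< pos_oriented R C >] then al C.1.1 C.1.2 else 0.

Lemma pcircB (f g : pt -> pt -> R) C :
  pcirc (fun a b => f a b - g a b) C = pcirc f C - pcirc g C.
Proof. by rewrite /pcirc; case: asboolP; rewrite ?subr0 // /lint sumrB. Qed.

Lemma pcirc_sum_pedge al C : pcirc al C = \sum_(k < 3) pedge al (iter k rot C).
Proof.
have pos_iter := rot_closed_iter pos_oriented_rot.
rewrite /pcirc /pedge; case: asboolP => hC; last first.
  by rewrite big1 // => k _; rewrite asboolF // pos_iter.
under eq_bigr => k _ do rewrite asboolT ?pos_iter //.
by case: C {hC} => [[x z] e]; rewrite lint_bdry_cell !big_ord_recr big_ord0 /= add0r.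
Qed.

Lemma sum_pedge_antisym (f : pt -> pt -> R) :
  (forall a b, bond R a b -> f b a = - f a b) ->
  \sum_(C \in [set: cell]) pedge f C = 0.
Proof.
move=> fN.
have pedge_opposite C : pedge f (opposite_cell C) = - pedge f C.
  rewrite /pedge; case: (asboolP (pos_oriented R C)) => hC.
    rewrite asboolT; last exact: pos_oriented_opposite.
    by case: C hC => [[x z] e] [[b1 _] _] /=; rewrite fN.
  rewrite asboolF ?oppr0 // => /pos_oriented_opposite.
  by rewrite opposite_cellK.
suff : \sum_(C \in [set: cell]) pedge f C = - \sum_(C \in [set: cell]) pedge f C.
  by lra.
rewrite {1}(reindex_fsbigT opposite_cell _ (Bijective opposite_cellK opposite_cellK)).
by rewrite -fsbigN; apply: eq_fsbigr => C _; exact: pedge_opposite.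
Qed.

Lemma sum_pcirc_antisym (f : pt -> pt -> R) (D : set cell) :
  finite_set D -> (forall C, D C -> D (rot C)) ->
  (forall C, pedge f C != 0 -> D C) ->
  (forall a b, bond R a b -> f b a = - f a b) ->
  \sum_(C \in D) pcirc f C = 0.
Proof.
move=> finD Drot fD fN; under eq_fsbigr => C _ do rewrite pcirc_sum_pedge.
rewrite fsbig_finite // exchange_big big1 // => k _; rewrite -fsbig_finite //.
rewrite (fsbig_widen D setT) //; last first.
  move=> C [_ /= hC]; apply/eqP; apply: contra_notT hC.
  by move=> /fD /(rot_closed_iter Drot).
by rewrite -reindex_fsbigT; [exact: sum_pedge_antisym | exact: iter_rot_bij].
Qed.

Lemma sum_cores_pcirc (al : pt -> pt -> R) (D : set cell) : cores al `<=` D ->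
  \sum_(C \in cores al) lint al (bdry C) = \sum_(C \in D) pcirc al C.
Proof.
move=> coresD; rewrite (eq_fsbigr (pcirc al)); last first.
  by move=> C; rewrite inE => -[hC _]; rewrite /pcirc asboolT.
apply: fsbig_widen => // C [_ hC]; rewrite /preimage /= /pcirc.
by case: asboolP => // hpos; apply/eqP; apply: contra_notT hC.
Qed.

Lemma sum_cores_lint_bdryA (al : pt -> pt -> R) (A : seq cell) :
  uniq A -> (forall C, C \in A -> pos_oriented R C) -> cores al `<=` [set` A] ->
  \sum_(C \in cores al) lint al (bdry C) = lint al (bdryA A).
Proof.
move=> uA posA coresA.
have -> : lint al (bdryA A) = \sum_(C <- A) lint al (bdry C).
  by rewrite /lint /bdryA big_flatten big_map.
apply: fsbig_fwiden => //.
move=> C [hCA hC]; apply/eqP; apply: contra_notT hC => hne.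
by split => //; exact: posA.
Qed.

Section Dy.
Variable y : pt -> R.

Lemma Dy_eq_small (f g : pt -> pt -> R) a b : in_Dy y f -> in_Dy y g ->
  bond R a b -> `|f a b| < 2^-1 -> g a b = f a b.
Proof.
move=> hf hg hab hsmall.
have [_ _ fi] := hf _ _ hab; have [g_bound _ gi] := hg _ _ hab.
apply/eqP; rewrite -subr_eq0; apply/eqP/int_norm_lt1.
  by rewrite (_ : g a b - f a b = (y b - y a - f a b) - (y b - y a - g a b));
    [apply: rpredB | ring].
have : `|g a b| <= 2^-1 by rewrite ler_norml.
have := ler_normB (g a b) (f a b); lra.
Qed.

Lemma lint_bdry_int (al : pt -> pt -> R) C : in_Dy y al -> is_cell R C ->
  lint al (bdry C) \is a Num.int.
Proof.
case: C => [[x z] e] hal [b1 [b2 b3]].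
have [_ _ i1] := hal _ _ b1; have [_ _ i2] := hal _ _ b2.
have [_ _ i3] := hal _ _ b3.
rewrite (_ : lint _ _ = - ((y z - y x - al x z) + (y e - y z - al z e)
                          + (y x - y e - al e x))).
  by rewrite rpredN; apply: rpredD; [apply: rpredD|].
by rewrite lint_bdry_cell; ring.
Qed.

Lemma lint_bdry_small (al : pt -> pt -> R) x z e :
  in_Dy y al -> is_cell R ((x, z), e) ->
  `|al x z| < 3^-1 -> `|al z e| < 3^-1 -> `|al e x| < 3^-1 ->
  lint al (bdry ((x, z), e)) = 0.
Proof.
move=> hal hc h1 h2 h3; apply: int_norm_lt1; first exact: lint_bdry_int.
rewrite lint_bdry_cell; apply: le_lt_trans (ler_normD _ _) _.
have := ler_normD (al x z) (al z e); lra.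
Qed.

Variables (alpha : pt -> pt -> R) (r : R).
Hypothesis alpha_Dy : in_Dy y alpha.
Hypothesis alpha_small : forall a b, bond R a b -> r < bnorm R a b ->
  `|alpha a b| < 3^-1.

Lemma cell_in_box_heavy C : is_cell R C -> 3^-1 <= `|alpha C.1.1 C.1.2| ->
  cell_in_box (r + 2) C.
Proof.
case: C => [[x z] e] [b1 [_ b3]] /= heavy.
have hx : inbox (r + 1) x.
  apply: inbox_le (inbox_bnorm b1); rewrite lerD2r leNgt.
  by apply: contraL heavy => /(alpha_small b1); rewrite -ltNge.
have r2 : r + 1 + 1 = r + 2 by ring.
split; [|split]; rewrite -r2.
- by apply: inbox_le hx; lra.
- exact: inbox_bond b1 hx.
- exact: inbox_bond (bond_sym b3) hx.
Qed.

Lemma cores_sub_box al : in_Dy y al -> cores al `<=` cell_in_box (r + 2).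
Proof.
move=> hal [[x z] e] [[hc _] hne]; have [b1 [b2 b3]] := hc.
have rot_box := rot_closed_iter (@cell_in_box_rot (r + 2)).
case: (lerP 3^-1 `|alpha x z|) => [h|h1]; first exact: cell_in_box_heavy.
case: (lerP 3^-1 `|alpha z e|) => [h|h2].
  by apply/(rot_box 1)/cell_in_box_heavy => //; apply: is_cell_rot.
case: (lerP 3^-1 `|alpha e x|) => [h|h3].
  by apply/(rot_box 2)/cell_in_box_heavy => //; do 2 apply: is_cell_rot.
have agree a b : bond R a b -> `|alpha a b| < 3^-1 -> al a b = alpha a b.
  by move=> hab hs; apply: Dy_eq_small => //; lra.
move: hne; rewrite lint_bdry_cell (agree _ _ b1) // (agree _ _ b2) //.
by rewrite (agree _ _ b3) // -lint_bdry_cell lint_bdry_small ?eqxx.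
Qed.

Lemma pedge_diff_sub_box al C : in_Dy y al ->
  pedge (fun a b => al a b - alpha a b) C != 0 -> cell_in_box (r + 2) C.
Proof.
case: C => [[x z] e] hal; rewrite /pedge.
case: asboolP => [[hc _] | _]; last by rewrite eqxx.
rewrite subr_eq0 => hne; apply: cell_in_box_heavy => //=; rewrite leNgt.
have [b1 _] := hc; apply: contra hne => hs.
by apply/eqP; apply: (Dy_eq_small alpha_Dy hal b1); lra.
Qed.

End Dy.

End Lattice.

Theorem proposition2p3 (R : realType) (y : pt -> R) (alpha : pt -> pt -> R) :
  in_Dy y alpha -> vanishes_at_infinity alpha ->
  forall alpha' : pt -> pt -> R, in_Dy y alpha' ->
    [/\ finite_set (cores alpha'),
        \sum_(C \in cores alpha') lint alpha' (bdry C)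
          = \sum_(C \in cores alpha) lint alpha (bdry C) &
        forall A : seq cell, uniq A -> (forall C : cell, C \in A -> pos_oriented R C) ->
          (forall C : cell, cores alpha C -> C \in A) ->
          \sum_(C \in cores alpha) lint alpha (bdry C) = lint alpha (bdryA A)].
Proof.
move=> alpha_Dy alpha_vanish alpha' alpha'_Dy.
have [r alpha_small] := alpha_vanish 3^-1 ltac:(rewrite invr_gt0; lra).
pose D := cell_in_box (r + 2).
have coresD := cores_sub_box alpha_Dy alpha_small.
split.
- exact: sub_finite_set (coresD _ alpha'_Dy) (cell_in_box_finite _).
- pose beta a b := alpha' a b - alpha a b.
  have beta0 : \sum_(C \in D) pcirc beta C = 0.
    apply: sum_pcirc_antisym.
    + exact: cell_in_box_finite.
    + exact: cell_in_box_rot.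
    + by move=> C; apply: pedge_diff_sub_box alpha'_Dy.
    + move=> a b hab; rewrite /beta; have [_ -> _] := alpha_Dy _ _ hab.
      by have [_ -> _] := alpha'_Dy _ _ hab; rewrite opprB opprK addrC.
  rewrite !(sum_cores_pcirc (coresD _ _)) //.
  rewrite (eq_fsbigr (fun C => pcirc alpha C + pcirc beta C)); last first.
    by move=> C _; rewrite pcircB addrC subrK.
  rewrite fsbig_split; last exact: cell_in_box_finite.
  change (\sum_(C \in D) pcirc alpha C + \sum_(C \in D) pcirc beta C
          = \sum_(C \in D) pcirc alpha C).
  by rewrite beta0 addr0.
- by move=> A uA posA coresA; apply: sum_cores_lint_bdryA.
Qed.
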